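(* Let $K\ge2$, $a,b\ge1$ be integers. For any scheme with uncoded cache placement for the $(K,a,b)$ coded caching problem for location-based content, with load $R$, one has $$R\ \ge\ \frac{K-1}{aK}\,\alpha_0+\frac{1}{bK}\,\beta_0+\frac{K-1}{2aK}\,\alpha_1 .$$
   Context: For integers $x\le y$, $[x:y]=\{x,x+1,\dots,y\}$ and $[n]=[1:n]$. For integers $c$ and $m\ge1$, $\langle c\rangle_m$ denotes the unique element of $\{1,\dots,m\}$ congruent to $c$ modulo $m$. The $(K,a,b)$ coded caching problem for location-based content: a server has $N=K(a+b)$ files $W_1,\dots,W_N$, each consisting of $B$ independent uniformly distributed bits. There are $K$ cache nodes, each storing $MB$ bits, and $K$ users, user $k$ having free access to cache node $k$ only. For $k\in[K]$ define $\mathcal D_{k,1}=[(k-1)(a+b)+1:ka+(k-1)b]$, $\mathcal D_{k,2}=[ka+(k-1)b+1:k(a+b)]$, $\mathcal D_{k,3}=\mathcal D_{\langle k+1\rangle_K,1}$, and $\mathcal D_k=\mathcal D_{k,1}\cup\mathcal D_{k,2}\cup\mathcal D_{k,3}$. A scheme consists of placement $Z_k=\phi_k(W_1,\dots,W_N)\in\{0,1\}^{MB}$ (fixed before demands), for each demand vector $\mathbf d\in\mathcal D_1\times\cdots\times\mathcal D_K$ a broadcast message $X=\psi(\mathbf d,W_1,\dots,W_N)\in\{0,1\}^{RB}$, and decoders such that user $k$ recovers $W_{d_k}$ exactly from $(\mathbf d,Z_k,X)$. The placement is uncoded if each $Z_k$ is a subset of the file bits copied directly. For uncoded placement, for $i\in[N]$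 and $\mathcal T\subseteq[K]$, $W_{i,\mathcal T}$ denotes the set of bits of $W_i$ stored in exactly the cache nodes in $\mathcal T$ (and in no other cache node), and $|W_{i,\mathcal T}|$ its number of bits. Let $\mathcal C_1=\bigcup_{k\in[K]}\mathcal D_{k,1}$, $\mathcal C_2=\bigcup_{k\in[K]}\mathcal D_{k,2}$, and define $\alpha_0=\sum_{i\in\mathcal C_1}|W_{i,\emptyset}|/B$, $\beta_0=\sum_{i\in\mathcal C_2}|W_{i,\emptyset}|/B$, $\alpha_1=\sum_{i\in\mathcal C_1}\sum_{j\in[K]}|W_{i,\{j\}}|/B$. *)

From HB Require Import structures.
From mathcomp Require Import all_boot all_order all_algebra.
Set Implicit Arguments. Unset Strict Implicit. Unset Printing Implicit Defensive.
Import Order.TTheory GRing.Theory Num.Theory.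

(* All indices below are the paper's 1-based indices (k in [1:K], file i in [1:N]). *)

Definition modOne (c m : nat) : nat := ((c.-1) %% m).+1.

Definition inD1 (a b k i : nat) : bool :=
  ((k.-1) * (a + b) + 1 <= i) && (i <= k * a + (k.-1) * b).
Definition inD2 (a b k i : nat) : bool :=
  (k * a + (k.-1) * b + 1 <= i) && (i <= k * (a + b)).
Definition inD3 (K a b k i : nat) : bool := inD1 a b (modOne k.+1 K) i.
Definition inD (K a b k i : nat) : bool :=
  [|| inD1 a b k i, inD2 a b k i | inD3 K a b k i].

Definition inC1 (K a b i : nat) : bool := [exists k : 'I_K, inD1 a b k.+1 i].
Definition inC2 (K a b i : nat) : bool := [exists k : 'I_K, inD2 a b k.+1 i].

(* Content of cache k under uncoded placement S: the stored bits of the files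
   (positions not stored are filled with the constant [false]; since the
   placement S is fixed and known, this is equivalent to the bit string Z_k). *)
Definition cache (N B K : nat) (S : 'I_K -> {set 'I_N * 'I_B}) (k : 'I_K)
  (W : 'I_N -> 'I_B -> bool) : 'I_N -> 'I_B -> bool :=
  fun i j => if (i, j) \in S k then W i j else false.

Definition Wpart (N B K : nat) (S : 'I_K -> {set 'I_N * 'I_B}) (i : 'I_N)
  (T : {set 'I_K}) : {set 'I_B} :=
  [set j : 'I_B | [set k : 'I_K | (i, j) \in S k] == T].

Local Open Scope ring_scope.

Definition alpha0 (K a b B : nat) (S : 'I_K -> {set 'I_(K * (a + b)) * 'I_B}) : rat :=
  (\sum_(i : 'I_(K * (a + b)) | inC1 K a b i.+1) #|Wpart S i set0|)%N%:R / B%:R.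
Definition beta0 (K a b B : nat) (S : 'I_K -> {set 'I_(K * (a + b)) * 'I_B}) : rat :=
  (\sum_(i : 'I_(K * (a + b)) | inC2 K a b i.+1) #|Wpart S i set0|)%N%:R / B%:R.
Definition alpha1 (K a b B : nat) (S : 'I_K -> {set 'I_(K * (a + b)) * 'I_B}) : rat :=
  (\sum_(i : 'I_(K * (a + b)) | inC1 K a b i.+1)
      \sum_(j : 'I_K) #|Wpart S i [set j]|)%N%:R / B%:R.

From HB Require Import structures.
From mathcomp Require Import all_boot all_order all_algebra.
From mathcomp Require Import zify ring.
From Stdlib Require Import FunctionalExtensionality.
Import Order.TTheory GRing.Theory Num.Theory.
Set Implicit Arguments. Unset Strict Implicit. Unset Printing Implicit Defensive.

(* The counting replaces entropy: files are arbitrary bit strings, so a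
   broadcast of L bits can distinguish at most 2^L file contents.  Fix a demand
   vector d and a decoding order [rank] on the users.  The [decodable] bits
   are the bits of some requested file d u that are stored only in caches of
   users decoded after u.  Decoding the users one by one recovers all of them
   from the broadcast, so every subset of them yields a distinct broadcast and
   there are at most L decodable bits ([card_decodable]).

   We apply this to two families of demand vectors, indexed by a user k and a
   file position (s, r): in [demandA] user k asks for a file of D_{k,2} and the
   others for files of their D_{v,1}; in [demandB] every user asks for a file
   of D_{v,3} except the predecessor of k, which asks for a file of its D_{v,2}.
   The decoding orders follow the cyclic offset from k.  Summing the 2abK
   resulting bounds, each bit is counted with a weight depending on its file
   class (C1 or C2) and on the set of caches holding it ([weight_le_count]);
   the weights add up to 2(K-1)b.alpha0 + (K-1)b.alpha1 + 2a.beta0 (times B),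
   which gives the theorem after dividing by 2abKB ([rate_of_count]). *)

Lemma leq_sum_term (I : finType) (F : I -> nat) (i0 : I) : F i0 <= \sum_i F i.
Proof. by rewrite (bigD1 i0) //= leq_addr. Qed.

Lemma leq_sum_except (I : finType) (F : I -> nat) (i0 : I) c :
  (forall i, i != i0 -> c <= F i) -> #|I|.-1 * c <= \sum_i F i.
Proof.
move=> le_cF; rewrite -(cardC1 i0) -sum_nat_const [X in _ <= X](bigD1 i0) //=.
by apply: leq_trans (leq_addl _ _); apply: leq_sum.
Qed.

Lemma leq_sum_const (I : finType) (F : I -> nat) c :
  (forall i, c <= F i) -> #|I| * c <= \sum_i F i.
Proof. by move=> le_cF; rewrite -sum_nat_const; apply: leq_sum. Qed.

Lemma leq_sum3_split (I J M : finType) (F G : I -> J -> M -> nat) i1 i2 m :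
  \sum_j F i1 j m + \sum_j G i2 j m <= \sum_i \sum_j \sum_l (F i j l + G i j l).
Proof.
have pick H i0 : \sum_j H i0 j m <= \sum_i \sum_j \sum_l H i j l.
  by apply: leq_trans (leq_sum_term _ i0); apply: leq_sum => j _; apply: leq_sum_term.
rewrite (eq_bigr (fun i => \sum_j \sum_l F i j l + \sum_j \sum_l G i j l)).
  by rewrite big_split leq_add ?pick.
by move=> i _; rewrite -big_split; apply: eq_bigr => j _; rewrite big_split.
Qed.

Lemma sum_pair_indicator (I J : finType) (P : pred I) (Q : I -> pred J) :
  \sum_(p : I * J) (P p.1 && Q p.1 p.2) = \sum_(i | P i) #|[set j | Q i j]|.
Proof.
rewrite -(pair_bigA _ (fun i j => nat_of_bool (P i && Q i j))) /= [RHS]big_mkcond.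
apply: eq_bigr => i _; case: (P i); last by rewrite big1.
by rewrite -sum1dep_card [RHS]big_mkcond; apply: eq_bigr => j _; case: (Q i j).
Qed.

Lemma card_indicator (T : finType) (A : {set T}) : #|A| = \sum_x (x \in A).
Proof. by rewrite -sum1_card big_mkcond; apply: eq_bigr => x _; case: (x \in A). Qed.

Lemma sum_card3 (T I J M : finType) (F G : I -> J -> M -> {set T}) :
  \sum_i \sum_j \sum_l (#|F i j l| + #|G i j l|) =
  \sum_x \sum_i \sum_j \sum_l ((x \in F i j l) + (x \in G i j l)).
Proof.
under eq_bigr => i _ do under eq_bigr => j _ do under eq_bigr => l _ do
  rewrite !card_indicator -big_split.
under eq_bigr => i _ do under eq_bigr => j _ do rewrite exchange_big.
under eq_bigr => i _ do rewrite exchange_big.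
by rewrite exchange_big.
Qed.

Section DecodingBound.

Variables (N B K L : nat) (S : 'I_K -> {set 'I_N * 'I_B}).
Variables (d : 'I_K -> 'I_N) (psi : ('I_N -> 'I_B -> bool) -> L.-tuple bool).
Variable dec : 'I_K -> ('I_N -> 'I_B -> bool) -> L.-tuple bool -> 'I_B -> bool.
Hypothesis hdec : forall W k j, dec k (cache S k W) (psi W) j = W (d k) j.
Variable rank : 'I_K -> nat.

Definition decodable : {set 'I_N * 'I_B} :=
  [set p | [exists u, (d u == p.1) && [forall k, (p \in S k) ==> (rank u < rank k)]]].

Lemma decodableP p :
  reflect (exists2 u, d u = p.1 & forall k, p \in S k -> rank u < rank k)
          (p \in decodable).
Proof.
rewrite inE; apply: (iffP existsP) => [[u /andP [/eqP du /forallP hu]] | [u du hu]].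
  by exists u => // k; apply/implyP.
by exists u; rewrite du eqxx; apply/forallP => k; apply/implyP/hu.
Qed.

Definition indicator (A : {set 'I_N * 'I_B}) : 'I_N -> 'I_B -> bool :=
  fun i j => (i, j) \in A.

(* Two libraries supported on decodable bits with the same broadcast are
   equal: by induction on the rank of the requesting user, each user sees the
   same cache content, hence decodes the same requested bits. *)
Lemma decodable_determined (A A' : {set 'I_N * 'I_B}) :
  A \subset decodable -> A' \subset decodable ->
  psi (indicator A) = psi (indicator A') -> A = A'.
Proof.
move=> sA sA' same_psi.
have outside p : p \notin decodable -> (p \in A) = (p \in A').
  move=> pU; rewrite (negbTE (contra (subsetP sA p) pU)).
  by rewrite (negbTE (contra (subsetP sA' p) pU)).
suff agree n p u : d u = p.1 -> (forall k, p \in S k -> rank u < rank k) ->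
    rank u < n -> (p \in A) = (p \in A').
  apply/setP => p; have [/decodableP [u du hu] | pU] := boolP (p \in decodable).
    exact: (agree (rank u).+1 p u).
  exact: outside.
elim: n p u => [//|n IH] p u du hu lt_un.
have same_cache : cache S u (indicator A) = cache S u (indicator A').
  apply: functional_extensionality => i; apply: functional_extensionality => j.
  rewrite /cache; case: ifP => // inSu.
  have [/decodableP [u' du' hu'] | qU] := boolP ((i, j) \in decodable).
    by apply: (IH _ u') => //; have := hu' u inSu; lia.
  exact: outside.
have := hdec (indicator A) u p.2; have := hdec (indicator A') u p.2.
by rewrite same_cache same_psi du /indicator -surjective_pairing => -> ->.
Qed.

(* At most L bits are decodable, since the broadcast is injective on them. *)
Lemma card_decodable : #|decodable| <= L.
Proof.
pose enc A := psi (indicator A).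
have enc_inj : {in powerset decodable &, injective enc}.
  by move=> A A'; rewrite !powersetE; exact: decodable_determined.
have := max_card [set enc A | A in powerset decodable].
rewrite (card_in_imset enc_inj) card_powerset card_tuple card_bool.
by rewrite leq_exp2l.
Qed.

End DecodingBound.

Section CyclicOffset.

Variable K : nat.

Definition offset (k v : 'I_K) : nat := (v + K - k) %% K.

Lemma offset_lt k v : offset k v < K.
Proof. by rewrite /offset ltn_pmod // (leq_ltn_trans _ (ltn_ord v)). Qed.

Lemma offset_eq0 k v : (offset k v == 0) = (v == k).
Proof.
have := ltn_ord k; have := ltn_ord v; rewrite /offset -val_eqE /= => ltvK ltkK.
have [le_kv | lt_vk] := leqP k v.
  by rewrite addnC -addnBA // modnDl modn_small; lia.
by rewrite modn_small; lia.
Qed.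

Lemma offset_ordS k v : offset k (ordS v) = (offset k v).+1 %% K.
Proof.
have le_kK := ltnW (ltn_ord k).
by rewrite /offset /= -!addnBA // modnDml -[in RHS]addn1 modnDml addn1 addSn.
Qed.

Lemma offset_ord_pred k g : g != k -> (offset k (ord_pred g)).+1 = offset k g.
Proof.
rewrite -offset_eq0 -{1 3}(ord_predK g) offset_ordS => nz.
rewrite modn_small // ltn_neqAle offset_lt andbT.
by apply: contraNneq nz => ->; rewrite modnn.
Qed.

Lemma offset_split k g j : g != k ->
  offset k j < offset k g \/ offset k (ord_pred g) < offset k j.
Proof. by move/offset_ord_pred; lia. Qed.

End CyclicOffset.

Section FileLayout.

Variables K a b : nat.
Local Notation N := (K * (a + b)).

Fact fileD1_subproof (g : 'I_K) (s : 'I_a) : g * (a + b) + s < N.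
Proof. have := ltn_ord g; have := ltn_ord s; nia. Qed.

Fact fileD2_subproof (g : 'I_K) (r : 'I_b) : g * (a + b) + a + r < N.
Proof. have := ltn_ord g; have := ltn_ord r; nia. Qed.

Definition fileD1 (g : 'I_K) (s : 'I_a) : 'I_N := Ordinal (fileD1_subproof g s).
Definition fileD2 (g : 'I_K) (r : 'I_b) : 'I_N := Ordinal (fileD2_subproof g r).

Lemma fileD1_inD1 (g : 'I_K) (s : 'I_a) : inD1 a b g.+1 (fileD1 g s).+1.
Proof. by rewrite /inD1 /= mulSn; have := ltn_ord s; lia. Qed.

Lemma fileD2_inD2 (g : 'I_K) (r : 'I_b) : inD2 a b g.+1 (fileD2 g r).+1.
Proof. by rewrite /inD2 /= !mulSn; have := ltn_ord r; lia. Qed.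

Lemma inC1_fileD1 (i : 'I_N) : inC1 K a b i.+1 -> exists g s, i = fileD1 g s.
Proof.
case/existsP => g; rewrite /inD1 /= mulSn => g_i.
have lt_sa : i - g * (a + b) < a by lia.
by exists g, (Ordinal lt_sa); apply: val_inj => /=; lia.
Qed.

Lemma inC2_fileD2 (i : 'I_N) : inC2 K a b i.+1 -> exists g r, i = fileD2 g r.
Proof.
case/existsP => g; rewrite /inD2 /= !mulSn => g_i.
have lt_rb : i - g * (a + b) - a < b by lia.
by exists g, (Ordinal lt_rb); apply: val_inj => /=; lia.
Qed.

Lemma inC1_notC2 (i : 'I_N) : inC1 K a b i.+1 -> inC2 K a b i.+1 = false.
Proof.
move=> /inC1_fileD1 [g [s ->]]; apply/negbTE/negP => /inC2_fileD2 [g' [r]].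
move=> /(congr1 (fun n : 'I_N => val n %% (a + b))) /=.
rewrite -addnA !modnMDl !modn_small; try lia.
all: by have := ltn_ord s; have := ltn_ord r; lia.
Qed.

End FileLayout.

Arguments fileD1 {K a b} g s.
Arguments fileD2 {K a b} g r.

Section Demands.

Variables K a b : nat.
Local Notation N := (K * (a + b)).
Implicit Types (k v : 'I_K) (s : 'I_a) (r : 'I_b).

Definition demandA k s r v : 'I_N := if v == k then fileD2 k r else fileD1 v s.
Definition rankA k v : nat := K - offset k v.

Definition demandB k s r v : 'I_N :=
  if ordS v == k then fileD2 v r else fileD1 (ordS v) s.
Definition rankB k v : nat := offset k v.

Lemma demandA_valid k s r v : inD K a b v.+1 (demandA k s r v).+1.
Proof.
rewrite /inD /demandA; case: eqP => [->|_]; first by rewrite fileD2_inD2 orbT.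
by rewrite fileD1_inD1.
Qed.

Lemma demandB_valid k s r v : inD K a b v.+1 (demandB k s r v).+1.
Proof.
rewrite /inD /demandB; case: eqP => _; first by rewrite fileD2_inD2 orbT.
by rewrite /inD3 /modOne /= (fileD1_inD1 b (ordS v) s) !orbT.
Qed.

End Demands.

Section BitCounting.

Variables K a b B : nat.
Local Notation N := (K * (a + b)).
Variable S : 'I_K -> {set 'I_N * 'I_B}.
Implicit Types (k g : 'I_K) (s : 'I_a) (r : 'I_b) (p : 'I_N * 'I_B).

Local Notation UA k s r := (decodable S (demandA k s r) (rankA k)).
Local Notation UB k s r := (decodable S (demandB k s r) (rankB k)).

Lemma D1_bit_in_UA k g s r p : p.1 = fileD1 g s -> g != k ->
  (forall k', p \in S k' -> offset k k' < offset k g) -> p \in UA k s r.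
Proof.
move=> p_file ne_gk early; apply/decodableP; exists g.
  by rewrite /demandA (negbTE ne_gk) p_file.
move=> k' /early; rewrite /rankA; have := offset_lt k g; lia.
Qed.

Lemma D1_bit_in_UB k g s r p : p.1 = fileD1 g s -> g != k ->
  (forall k', p \in S k' -> offset k (ord_pred g) < offset k k') -> p \in UB k s r.
Proof.
move=> p_file ne_gk late; apply/decodableP; exists (ord_pred g) => //.
by rewrite /demandB ord_predK (negbTE ne_gk) p_file.
Qed.

Lemma D2_bit_in_UA g s r p : p.1 = fileD2 g r -> (forall k, p \notin S k) ->
  p \in UA g s r.
Proof.
move=> p_file uncached; apply/decodableP; exists g => [|k].
  by rewrite /demandA eqxx p_file.
by rewrite (negbTE (uncached k)).
Qed.

Lemma D2_bit_in_UB g s r p : p.1 = fileD2 g r -> (forall k, p \notin S k) ->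
  p \in UB (ordS g) s r.
Proof.
move=> p_file uncached; apply/decodableP; exists g => [|k].
  by rewrite /demandB eqxx p_file.
by rewrite (negbTE (uncached k)).
Qed.

Definition bit_count p : nat :=
  \sum_k \sum_s \sum_r ((p \in UA k s r) + (p \in UB k s r)).

Lemma count_uncached_D1 g s0 p : p.1 = fileD1 g s0 -> (forall k, p \notin S k) ->
  (K - 1) * (2 * b) <= bit_count p.
Proof.
move=> p_file uncached.
have no_holder k : p \in S k -> False by rewrite (negbTE (uncached k)).
have -> : K - 1 = #|'I_K|.-1 by rewrite card_ord subn1.
rewrite /bit_count; apply: (leq_sum_except (i0 := g)) => k ne_kg.
rewrite eq_sym in ne_kg; apply: leq_trans (leq_sum_term _ s0).
rewrite mulnC -[b in b * 2]card_ord; apply: leq_sum_const => r.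
rewrite (D1_bit_in_UA r p_file ne_kg) ?(D1_bit_in_UB r p_file ne_kg) //.
all: by move=> k' /no_holder.
Qed.

Lemma count_single_holder_D1 g s0 j0 p : p.1 = fileD1 g s0 ->
  (forall k, p \in S k -> k = j0) -> (K - 1) * b <= bit_count p.
Proof.
move=> p_file only_j0; have -> : K - 1 = #|'I_K|.-1 by rewrite card_ord subn1.
rewrite /bit_count; apply: (leq_sum_except (i0 := g)) => k ne_kg.
rewrite eq_sym in ne_kg; apply: leq_trans (leq_sum_term _ s0).
rewrite -[b in b <= _]card_ord -[#|_|]muln1; apply: leq_sum_const => r.
have [early | late] := offset_split j0 ne_kg.
  by rewrite (D1_bit_in_UA r p_file ne_kg) // => k' /only_j0 ->.
by rewrite (D1_bit_in_UB r p_file ne_kg) ?addn1 // => k' /only_j0 ->.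
Qed.

Lemma count_uncached_D2 g r0 p : p.1 = fileD2 g r0 -> (forall k, p \notin S k) ->
  2 * a <= bit_count p.
Proof.
move=> p_file uncached; rewrite /bit_count mul2n -addnn.
apply: leq_trans (leq_sum3_split _ _ g (ordS g) r0).
rewrite -{1 2}[a in a + a]card_ord -{1 2}[#|_|]muln1.
by rewrite leq_add // leq_sum_const // => s;
  rewrite ?(D2_bit_in_UA s p_file uncached) ?(D2_bit_in_UB s p_file uncached).
Qed.

Definition holders p : {set 'I_K} := [set k | p \in S k].

Definition bit_weight p : nat :=
    2 * (K - 1) * b * (inC1 K a b p.1.+1 && (holders p == set0))
  + (K - 1) * b * \sum_j (inC1 K a b p.1.+1 && (holders p == [set j]))
  + 2 * a * (inC2 K a b p.1.+1 && (holders p == set0)).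

Lemma sum_bit_weight :
  \sum_p bit_weight p =
    2 * (K - 1) * b * \sum_(i : 'I_N | inC1 K a b i.+1) #|Wpart S i set0|
  + (K - 1) * b * \sum_(i : 'I_N | inC1 K a b i.+1) \sum_j #|Wpart S i [set j]|
  + 2 * a * \sum_(i : 'I_N | inC2 K a b i.+1) #|Wpart S i set0|.
Proof.
have by_file (C : pred nat) (T : {set 'I_K}) :
    \sum_(p : 'I_N * 'I_B) (C p.1.+1 && (holders p == T))
    = \sum_(i : 'I_N | C i.+1) #|Wpart S i T|.
  rewrite -(sum_pair_indicator (fun i : 'I_N => C i.+1) (fun i j => holders (i, j) == T)).
  by apply: eq_bigr => -[].
rewrite !big_split /= -!big_distrr /= exchange_big [in RHS]exchange_big /=.
rewrite !by_file; by under eq_bigr => j _ do rewrite by_file.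
Qed.

Lemma weight_le_count p : bit_weight p <= bit_count p.
Proof.
have holderP k : (k \in holders p) = (p \in S k) by rewrite inE.
rewrite /bit_weight; case C1p : (inC1 K a b p.1.+1) => /=; last first.
  rewrite big1 // !muln0 !add0n; case C2p : (inC2 K a b p.1.+1); last by rewrite muln0.
  have [g [r0 p_file]] := inC2_fileD2 C2p.
  have [T0 | T_ne0] := eqVneq (holders p) set0; last by rewrite muln0.
  rewrite muln1; apply: (count_uncached_D2 p_file) => k.
  by rewrite -holderP T0 inE.
rewrite (inC1_notC2 C1p) /= muln0 addn0; have [g [s0 p_file]] := inC1_fileD1 C1p.
have [T0 | T_ne0] := eqVneq (holders p) set0.
  rewrite T0 big1 => [|j _]; last first.
    by apply/eqP; rewrite eqb0 eq_sym; apply/set0Pn; exists j; rewrite set11.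
  rewrite /= muln0 addn0 muln1 -mulnA mulnCA; apply: (count_uncached_D1 p_file) => k.
  by rewrite -holderP T0 inE.
rewrite muln0 add0n.
have [j0 T1 | not_single] := pickP (fun j => holders p == [set j]); last first.
  by rewrite big1 ?muln0 // => j _; rewrite not_single.
rewrite (bigD1 j0) //= T1 big1 => [|j ne_j]; last first.
  by apply/eqP; rewrite eqb0 (eqP T1) (inj_eq set1_inj) eq_sym.
rewrite addn0 muln1; apply: (count_single_holder_D1 p_file (j0 := j0)) => k.
by rewrite -holderP (eqP T1) => /set1P.
Qed.

End BitCounting.

Section TotalCount.

Variables K a b B L : nat.
Local Notation N := (K * (a + b)).
Variable S : 'I_K -> {set 'I_N * 'I_B}.
Variable psi : ('I_K -> 'I_N) -> ('I_N -> 'I_B -> bool) -> L.-tuple bool.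
Variable dec :
  ('I_K -> 'I_N) -> 'I_K -> ('I_N -> 'I_B -> bool) -> L.-tuple bool -> 'I_B -> bool.
Hypothesis hdec : forall d : 'I_K -> 'I_N,
  (forall k : 'I_K, inD K a b k.+1 (d k).+1) ->
  forall W k j, dec d k (cache S k W) (psi d W) j = W (d k) j.

Lemma total_count_le : \sum_p bit_count S p <= 2 * a * b * K * L.
Proof.
rewrite /bit_count -sum_card3.
apply: leq_trans (_ : \sum_(k : 'I_K) \sum_(s : 'I_a) \sum_(r : 'I_b) (L + L) <= _).
  apply: leq_sum => k _; apply: leq_sum => s _; apply: leq_sum => r _.
  by rewrite leq_add // (card_decodable (hdec (demandA_valid k s r)),
                         card_decodable (hdec (demandB_valid k s r))).
by rewrite !sum_nat_const !card_ord; nia.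
Qed.

End TotalCount.

Local Open Scope ring_scope.

Lemma rate_of_count (K a b B L A0 A1 B0 : nat) :
  (0 < K)%N -> (0 < a)%N -> (0 < b)%N -> (0 < B)%N ->
  (2 * (K - 1) * b * A0 + (K - 1) * b * A1 + 2 * a * B0 <= 2 * a * b * K * L)%N ->
  (K - 1)%:R / (a * K)%:R * (A0%:R / B%:R) + 1 / (b * K)%:R * (B0%:R / B%:R)
    + (K - 1)%:R / (2 * a * K)%:R * (A1%:R / B%:R) <= L%:R / B%:R :> rat.
Proof.
move=> K_gt0 a_gt0 b_gt0 B_gt0 le_count.
have ne0 n : (0 < n)%N -> n%:R != 0 :> rat by move=> n_gt0; rewrite pnatr_eq0 -lt0n.
pose D : rat := 2%:R * a%:R * b%:R * K%:R * B%:R.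
have D_gt0 : 0 < D by rewrite !mulr_gt0 // ltr0n.
have -> : (K - 1)%:R / (a * K)%:R * (A0%:R / B%:R) + 1 / (b * K)%:R * (B0%:R / B%:R)
    + (K - 1)%:R / (2 * a * K)%:R * (A1%:R / B%:R)
  = (2%:R * (K - 1)%:R * b%:R * A0%:R + (K - 1)%:R * b%:R * A1%:R
     + 2%:R * a%:R * B0%:R) / D.
  by rewrite /D !natrM; field; rewrite !ne0.
have -> : L%:R / B%:R = 2%:R * a%:R * b%:R * K%:R * L%:R / D :> rat.
  by rewrite /D; field; rewrite !ne0.
rewrite ler_pM2r ?invr_gt0 //.
by move: le_count; rewrite -(ler_nat rat) !natrD !natrM.
Qed.

Theorem mainTheorem6 (K a b B MB L : nat)
  (hK : (2 <= K)%N) (ha : (1 <= a)%N) (hb : (1 <= b)%N) (hB : (0 < B)%N)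
  (S : 'I_K -> {set 'I_(K * (a + b)) * 'I_B})
  (hcap : forall k, (#|S k| <= MB)%N)
  (psi : ('I_K -> 'I_(K * (a + b))) -> ('I_(K * (a + b)) -> 'I_B -> bool) ->
         L.-tuple bool)
  (dec : ('I_K -> 'I_(K * (a + b))) -> 'I_K ->
         ('I_(K * (a + b)) -> 'I_B -> bool) -> L.-tuple bool -> 'I_B -> bool)
  (hdec : forall d : 'I_K -> 'I_(K * (a + b)),
      (forall k : 'I_K, inD K a b k.+1 (d k).+1) ->
      forall (W : 'I_(K * (a + b)) -> 'I_B -> bool) (k : 'I_K) (j : 'I_B),
        dec d k (cache S k W) (psi d W) j = W (d k) j) :
  (K - 1)%:R / (a * K)%:R * alpha0 S + 1 / (b * K)%:R * beta0 S
    + (K - 1)%:R / (2 * a * K)%:R * alpha1 S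
  <= L%:R / B%:R :> rat.
Proof.
have weights_le_counts : (\sum_p bit_weight S p <= \sum_p bit_count S p)%N.
  by apply: leq_sum => p _; apply: weight_le_count.
have := leq_trans weights_le_counts (total_count_le hdec).
rewrite sum_bit_weight; apply: rate_of_count => //; exact: ltnW.
Qed.
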